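(* Let $k\ge 2$, $\boldsymbol\mu\in\mathbb{R}^k$, $\boldsymbol\Sigma$ a symmetric positive definite $k\times k$ matrix, $\mathbf{1}\in\mathbb{R}^k$ and $\mathbf{1}_n\in\mathbb{R}^n$ vectors of ones, and $\mathbf{Q}=\boldsymbol\Sigma^{-1}-\dfrac{\boldsymbol\Sigma^{-1}\mathbf{1}\mathbf{1}'\boldsymbol\Sigma^{-1}}{\mathbf{1}'\boldsymbol\Sigma^{-1}\mathbf{1}}$. Let $n\ge 2$, $\alpha_1,\dots,\alpha_n>0$, $\beta_1,\dots,\beta_n>0$ with $\sum_i\beta_i=1$, $\phi_1,\dots,\phi_n>0$; set $\boldsymbol\beta=(\beta_1,\dots,\beta_n)'$, $\mathbf{A}_0=\mathrm{diag}(\alpha_i)$, $\boldsymbol\Phi=\mathrm{diag}(\phi_i)$, $\mathbf{B}=\mathrm{diag}(\beta_i)$, $\bar\phi=\sum_i\beta_i\phi_i$, $\mathbf{A}=(\mathbf{A}_0+\boldsymbol\Phi)\mathbf{B}+(\bar\phi\mathbf{I}_n-2\boldsymbol\Phi)\boldsymbol\beta\boldsymbol\beta'$, $\mathbf{A}_\phi=(\mathbf{A}+\mathbf{A}')/2$. Let $\mathcal{W}^*$ be the maximizer over $k\times n$ matrices $\mathbf{W}$ of $\boldsymbol\beta'\mathbf{W}'\boldsymbol\mu-\frac12\operatorname{tr}(\mathbf{A}\mathbf{W}'\boldsymbol\Sigma\mathbf{W})$ subject to $\mathbf{W}'\mathbf{1}=\mathbf{1}_n$, namely $\mathcal{W}^*=\frac{\boldsymbol\Sigma^{-1}\mathbf{1}}{\mathbf{1}'\boldsymbol\Sigma^{-1}\mathbf{1}}\mathbf{1}_n'+\mathbf{Q}\boldsymbol\mu(\boldsymbol\beta'\mathbf{A}_\phi^{-1})$,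 and let $\boldsymbol\omega^*_{\mathbf f}=\mathcal{W}^*\boldsymbol\beta$ be the optimal fund weight vector. Then: (a) If the $\alpha_i$ are pairwise distinct and $\beta_i=1/n$ for all $i$, then $\mathbf{A}=n^{-2}\tilde{\mathbf{A}}$ with $\tilde{\mathbf{A}}=n(\mathbf{A}_0+\boldsymbol\Phi)+(\bar\phi\mathbf{I}_n-2\boldsymbol\Phi)\mathbf{1}_n\mathbf{1}_n'$ (here $\bar\phi=\frac1n\sum_i\phi_i$), and, with $\tilde{\mathbf{A}}_\phi=(\tilde{\mathbf{A}}+\tilde{\mathbf{A}}')/2$, $$\boldsymbol\omega^*_{\mathbf f}=\frac{\boldsymbol\Sigma^{-1}\mathbf{1}}{\mathbf{1}'\boldsymbol\Sigma^{-1}\mathbf{1}}+\mathbf{Q}\boldsymbol\mu\,(\mathbf{1}_n'\tilde{\mathbf{A}}_\phi^{-1}\mathbf{1}_n).$$ (b) If the $\alpha_i$ are pairwise distinct and $\phi_i=\phi>0$ for all $i$, then $\mathbf{A}=(\mathbf{A}_0+\phi\mathbf{I}_n)\mathbf{B}-\phi\boldsymbol\beta\boldsymbol\beta'$, which is symmetric and positive definite, and $$\boldsymbol\omega^*_{\mathbf f}=\frac{\boldsymbol\Sigma^{-1}\mathbf{1}}{\mathbf{1}'\boldsymbol\Sigma^{-1}\mathbf{1}}+\mathbf{Q}\boldsymbol\mu\,(\boldsymbol\beta'\mathbf{A}^{-1}\boldsymbol\beta).$$ (c) If $\alpha_i=\alpha$ and $\phi_i=\phi$ for all $i$, then $\boldsymbol\omega^*_{\mathbf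 f}$ coincides with the non-mimicking optimal fund weights $\boldsymbol\omega_{\mathbf f}=\frac{\boldsymbol\Sigma^{-1}\mathbf{1}}{\mathbf{1}'\boldsymbol\Sigma^{-1}\mathbf{1}}+\alpha_{\mathbf f}^{-1}\mathbf{Q}\boldsymbol\mu$ with $\alpha_{\mathbf f}=(\mathbf{1}_n'\mathbf{A}_0^{-1}\boldsymbol\beta)^{-1}$, i.e. $\boldsymbol\omega^*_{\mathbf f}=\frac{\boldsymbol\Sigma^{-1}\mathbf{1}}{\mathbf{1}'\boldsymbol\Sigma^{-1}\mathbf{1}}+\alpha^{-1}\mathbf{Q}\boldsymbol\mu$.
   Context: $\boldsymbol\mu,\boldsymbol\Sigma$ are the mean and covariance of returns of $k$ risky assets; $n$ investors have risk aversions $\alpha_i$, wealth shares $\beta_i$ and mimicking coefficients $\phi_i$; the objective is the wealth-weighted sum of the investors' mean-variance objectives, each penalized by $\frac{\phi_i}{2}(\mathbf{w}_i-\mathbf{W}\boldsymbol\beta)'\boldsymbol\Sigma(\mathbf{w}_i-\mathbf{W}\boldsymbol\beta)$, where $\mathbf{w}_i$ is column $i$ of $\mathbf{W}$. The vector $\boldsymbol\omega_{\mathbf f}$ is the maximizer of $\sum_i\beta_i(\mathbf{w}_i'\boldsymbol\mu-\frac{\alpha_i}{2}\mathbf{w}_i'\boldsymbol\Sigma\mathbf{w}_i)$ aggregated as $\mathbf{W}\boldsymbol\beta$ (no mimicking). *)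

From HB Require Import structures.
From mathcomp Require Import all_boot all_order all_algebra.
Set Implicit Arguments. Unset Strict Implicit. Unset Printing Implicit Defensive.
Import Order.TTheory GRing.Theory Num.Theory.
Local Open Scope ring_scope.

Definition onesv (R : ringType) (m : nat) : 'cV[R]_m := const_mx 1.

Definition sc (R : ringType) (M : 'M[R]_1) : R := M 0 0.

Definition posdef (R : numDomainType) (m : nat) (M : 'M[R]_m) : Prop :=
  forall x : 'cV[R]_m, x != 0 -> 0 < sc (x^T *m M *m x).

Section Model.
Variables (R : realFieldType) (k n : nat).
Implicit Types (Sigma : 'M[R]_k) (mu : 'cV[R]_k) (alpha beta phi : 'I_n -> R).

Definition gmv Sigma : 'cV[R]_k :=
  (sc ((onesv R k)^T *m invmx Sigma *m onesv R k))^-1 *: (invmx Sigma *m onesv R k).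

Definition Qmat Sigma : 'M[R]_k :=
  invmx Sigma -
  (sc ((onesv R k)^T *m invmx Sigma *m onesv R k))^-1 *:
     (invmx Sigma *m onesv R k *m (onesv R k)^T *m invmx Sigma).

Definition betav beta : 'cV[R]_n := \col_i beta i.
Definition A0mat alpha : 'M[R]_n := diag_mx (\row_i alpha i).
Definition Phimat phi : 'M[R]_n := diag_mx (\row_i phi i).
Definition Bmat beta : 'M[R]_n := diag_mx (\row_i beta i).
Definition phibar beta phi : R := \sum_i beta i * phi i.

Definition Amat alpha beta phi : 'M[R]_n :=
  (A0mat alpha + Phimat phi) *m Bmat beta
  + ((phibar beta phi)%:M - 2%:R *: Phimat phi) *m (betav beta *m (betav beta)^T).

Definition sympart (M : 'M[R]_n) : 'M[R]_n := (2%:R)^-1 *: (M + M^T).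

Definition Wstar Sigma mu alpha beta phi : 'M[R]_(k, n) :=
  gmv Sigma *m (onesv R n)^T
  + (Qmat Sigma *m mu) *m ((betav beta)^T *m invmx (sympart (Amat alpha beta phi))).

Definition omega_star Sigma mu alpha beta phi : 'cV[R]_k :=
  Wstar Sigma mu alpha beta phi *m betav beta.

Definition Atilde alpha phi : 'M[R]_n :=
  n%:R *: (A0mat alpha + Phimat phi)
  + (((n%:R)^-1 * \sum_i phi i)%:M - 2%:R *: Phimat phi)
      *m (onesv R n *m (onesv R n)^T).

Definition alpha_f alpha beta : R :=
  (sc ((onesv R n)^T *m invmx (A0mat alpha) *m betav beta))^-1.

Definition omega_f Sigma mu alpha beta : 'cV[R]_k :=
  gmv Sigma + (alpha_f alpha beta)^-1 *: (Qmat Sigma *m mu).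

End Model.

(** Since [1_n' beta = 1], the fund weights are
    [omega*_f = W* beta = gmv + (beta' A_phi^-1 beta) Q mu], so everything hinges on the
    scalar [beta' A_phi^-1 beta].  It is well defined because
    [x' A x = sum_i alpha_i beta_i x_i^2 + sum_i phi_i beta_i (x_i - beta' x)^2], which makes
    [A], hence [A_phi], positive definite.  In (a), [beta = 1_n / n] and [A = n^-2 Atilde],
    and the powers of [n] cancel; in (b), [A] is symmetric, so [A_phi = A]; in (c), moreover
    [A 1_n = alpha beta], so [A^-1 beta = alpha^-1 1_n] and the scalar is [alpha^-1]. *)
From HB Require Import structures.
From mathcomp Require Import all_boot all_order all_algebra.
From mathcomp Require Import ring.
Set Implicit Arguments. Unset Strict Implicit. Unset Printing Implicit Defensive.
Import Order.TTheory GRing.Theory Num.Theory.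
Local Open Scope ring_scope.

Section ScalarMatrix.
Variable R : nzRingType.

Lemma scD (M N : 'M[R]_1) : sc (M + N) = sc M + sc N.
Proof. by rewrite /sc mxE. Qed.

Lemma scB (M N : 'M[R]_1) : sc (M - N) = sc M - sc N.
Proof. by rewrite /sc !mxE. Qed.

Lemma scZ (c : R) (M : 'M[R]_1) : sc (c *: M) = c * sc M.
Proof. by rewrite /sc mxE. Qed.

Lemma sc_trmx (M : 'M[R]_1) : sc M^T = sc M.
Proof. by rewrite /sc mxE. Qed.

Lemma sc_mulmx m (u : 'rV[R]_m) (v : 'cV[R]_m) : sc (u *m v) = \sum_i u 0 i * v i 0.
Proof. by rewrite /sc mxE. Qed.

Lemma sc_mulmx11 (u v : 'M[R]_1) : sc (u *m v) = sc u * sc v.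
Proof. by rewrite sc_mulmx big_ord1. Qed.

End ScalarMatrix.

Section ComScalarMatrix.
Variable R : comNzRingType.

Lemma sc_quadZ m (c : R) (u : 'cV[R]_m) (M : 'M[R]_m) :
  sc ((c *: u)^T *m M *m (c *: u)) = c ^+ 2 * sc (u^T *m M *m u).
Proof. by rewrite [(c *: u)^T]linearZ /= -scalemxAr -!scalemxAl !scZ mulrA -expr2. Qed.

Lemma mulmx_sc m (v : 'cV[R]_m) (s : 'M[R]_1) : v *m s = sc s *: v.
Proof. by apply/matrixP => i j; rewrite ord1 !mxE big_ord1 mulrC. Qed.

End ComScalarMatrix.

Lemma posdef_unitmx (R : numFieldType) m (M : 'M[R]_m) : posdef M -> M \in unitmx.
Proof.
move=> pdM; rewrite -row_free_unit -kermx_eq0.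
apply/idPn => /rowV0Pn [v /sub_kermxP vM v_neq0].
have := pdM v^T; rewrite trmx_eq0 => /(_ v_neq0).
by rewrite trmxK vM mul0mx /sc mxE ltxx.
Qed.

Section SymmetricPart.
Variables (R : realFieldType) (n : nat).
Implicit Types (M : 'M[R]_n) (x : 'cV[R]_n).

Lemma sc_quad_sympart M x : sc (x^T *m sympart M *m x) = sc (x^T *m M *m x).
Proof.
rewrite /sympart -scalemxAr -scalemxAl scZ mulmxDr mulmxDl scD.
have -> : x^T *m M^T *m x = (x^T *m M *m x)^T by rewrite !trmx_mul trmxK mulmxA.
rewrite sc_trmx; have two_neq0 : (2%:R : R) != 0 by rewrite pnatr_eq0.
by field.
Qed.

Lemma posdef_sympart M : posdef M -> posdef (sympart M).
Proof. by move=> pdM x /pdM; rewrite sc_quad_sympart. Qed.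

Lemma sympartZ (c : R) M : sympart (c *: M) = c *: sympart M.
Proof. by rewrite /sympart linearZ /= -scalerDr !scalerA mulrC. Qed.

Lemma sympart_id M : M^T = M -> sympart M = M.
Proof.
move=> symM; rewrite /sympart symM -[M + M]mulr2n -scaler_nat scalerA mulVf ?scale1r //.
by rewrite pnatr_eq0.
Qed.

End SymmetricPart.

Section MimickingMatrix.
Variables (R : realFieldType) (n : nat).
Implicit Types (alpha beta phi : 'I_n -> R) (x : 'cV[R]_n).

Lemma sc_ones_betav beta : sc ((onesv R n)^T *m betav beta) = \sum_i beta i.
Proof. by rewrite sc_mulmx; apply: eq_bigr => i _; rewrite !mxE mul1r. Qed.

Lemma sc_betav_ones beta : sc ((betav beta)^T *m onesv R n) = \sum_i beta i.
Proof. by rewrite -sc_trmx trmx_mul trmxK sc_ones_betav. Qed.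

Lemma diag_mx_row_const (f : 'I_n -> R) (c : R) :
  (forall i, f i = c) -> diag_mx (\row_i f i) = c%:M.
Proof. by move=> f_c; rewrite -diag_const_mx; congr diag_mx; apply/rowP => i; rewrite !mxE. Qed.

Lemma betav_uniform beta :
  (forall i, beta i = (n%:R)^-1) -> betav beta = (n%:R)^-1 *: onesv R n.
Proof. by move=> beta_uniform; apply/matrixP => i j; rewrite !mxE beta_uniform mulr1. Qed.

Lemma Bmat_mul_ones beta : Bmat beta *m onesv R n = betav beta.
Proof. by apply/matrixP => i j; rewrite mul_diag_mx !mxE mulr1. Qed.

Lemma sc_quad_Amat alpha beta phi x :
  sc (x^T *m Amat alpha beta phi *m x) =
  \sum_i alpha i * beta i * x i 0 ^+ 2 +
  \sum_i phi i * beta i * (x i 0 - \sum_j beta j * x j 0) ^+ 2.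
Proof.
set y := \sum_j beta j * x j 0.
have diag_part : sc (x^T *m ((A0mat alpha + Phimat phi) *m Bmat beta) *m x)
    = \sum_i (alpha i * beta i * x i 0 ^+ 2 + phi i * beta i * x i 0 ^+ 2).
  rewrite /A0mat /Phimat /Bmat -raddfD mulmx_diag sc_mulmx; apply: eq_bigr => i _.
  by rewrite mul_mx_diag !mxE; ring.
have rank_one_part :
    sc (x^T *m (((phibar beta phi)%:M - 2%:R *: Phimat phi) *m
                (betav beta *m (betav beta)^T)) *m x)
    = (phibar beta phi * y - 2%:R * \sum_i phi i * beta i * x i 0) * y.
  have beta_x : sc ((betav beta)^T *m x) = y.
    by rewrite sc_mulmx; apply: eq_bigr => i _; rewrite !mxE.
  have x_beta : sc (x^T *m betav beta) = y by rewrite -beta_x -sc_trmx trmx_mul trmxK.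
  have x_Phi_beta : sc (x^T *m Phimat phi *m betav beta) = \sum_i phi i * beta i * x i 0.
    by rewrite sc_mulmx; apply: eq_bigr => i _; rewrite mul_mx_diag !mxE; ring.
  rewrite !mulmxA -mulmxA sc_mulmx11 beta_x mulmxBr mulmxBl mul_mx_scalar.
  by rewrite -scalemxAr -!scalemxAl scB !scZ x_beta x_Phi_beta.
have square_expansion : \sum_i phi i * beta i * (x i 0 - y) ^+ 2 =
    \sum_i phi i * beta i * x i 0 ^+ 2 - 2%:R * y * \sum_i phi i * beta i * x i 0
    + y ^+ 2 * phibar beta phi.
  rewrite /phibar [2%:R * y * _]mulr_sumr [y ^+ 2 * _]mulr_sumr -sumrB -big_split.
  by apply: eq_bigr => i _ /=; ring.
rewrite /Amat mulmxDr mulmxDl scD diag_part rank_one_part square_expansion big_split /=.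
ring.
Qed.

Lemma posdef_Amat alpha beta phi :
  (forall i, 0 < alpha i) -> (forall i, 0 < beta i) -> (forall i, 0 < phi i) ->
  posdef (Amat alpha beta phi).
Proof.
move=> alpha_gt0 beta_gt0 phi_gt0 x /matrix0Pn [i [j]]; rewrite ord1 => xi_neq0.
rewrite sc_quad_Amat; apply: ltr_wpDr.
  by apply: sumr_ge0 => l _; rewrite mulr_ge0 ?sqr_ge0 ?mulr_ge0 ?ltW.
rewrite (bigD1 i) //=; apply: ltr_wpDr.
  by apply: sumr_ge0 => l _; rewrite mulr_ge0 ?sqr_ge0 ?mulr_ge0 ?ltW.
have xi2_gt0 : 0 < x i 0 ^+ 2 by rewrite exprn_even_gt0 //= xi_neq0 orbT.
by apply: mulr_gt0 => //; apply: mulr_gt0.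
Qed.

Lemma Amat_const_phi alpha beta phi (ph : R) :
  (forall i, phi i = ph) -> \sum_i beta i = 1 ->
  Amat alpha beta phi
  = (A0mat alpha + ph%:M) *m Bmat beta - ph *: (betav beta *m (betav beta)^T).
Proof.
move=> phi_ph sum_beta.
have Phi_ph : Phimat phi = ph%:M by exact: diag_mx_row_const.
have phibar_ph : phibar beta phi = ph.
  by rewrite /phibar (eq_bigr _ (fun i _ => congr1 _ (phi_ph i))) -mulr_suml sum_beta mul1r.
rewrite /Amat Phi_ph phibar_ph scale_scalar_mx -raddfB mul_scalar_mx -scaleNr.
by congr (_ + _ *: _); ring.
Qed.

Lemma Amat_const_phi_sym alpha beta phi (ph : R) :
  (forall i, phi i = ph) -> \sum_i beta i = 1 ->
  (Amat alpha beta phi)^T = Amat alpha beta phi.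
Proof.
move=> phi_ph sum_beta; rewrite (Amat_const_phi alpha phi_ph sum_beta).
rewrite /A0mat /Bmat -diag_const_mx -raddfD mulmx_diag.
by rewrite linearB /= linearZ /= tr_diag_mx trmx_mul trmxK.
Qed.

Lemma Amat_uniform_beta alpha beta phi :
  (0 < n)%N -> (forall i, beta i = (n%:R)^-1) ->
  Amat alpha beta phi = ((n%:R) ^+ 2)^-1 *: Atilde alpha phi.
Proof.
move=> n_gt0 beta_uniform; set N : R := n%:R.
have N_neq0 : N != 0 by rewrite pnatr_eq0 -lt0n.
have B_scalar : Bmat beta = N^-1%:M by exact: diag_mx_row_const.
have phibar_mean : phibar beta phi = N^-1 * \sum_i phi i.
  by rewrite /phibar mulr_sumr; apply: eq_bigr => i _; rewrite beta_uniform.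
rewrite /Amat /Atilde -/N betav_uniform // B_scalar phibar_mean mul_mx_scalar.
rewrite [(_ *: onesv R n)^T]linearZ /= -scalemxAl -!scalemxAr scalerA.
rewrite [in RHS]scalerDr [in RHS]scalerA.
by congr (_ *: _ + _ *: _); field.
Qed.

Lemma Amat_const_mul_ones alpha beta phi (a ph : R) :
  (forall i, alpha i = a) -> (forall i, phi i = ph) -> \sum_i beta i = 1 ->
  Amat alpha beta phi *m onesv R n = a *: betav beta.
Proof.
move=> alpha_a phi_ph sum_beta.
have A0_a : A0mat alpha = a%:M by exact: diag_mx_row_const.
rewrite (Amat_const_phi alpha phi_ph sum_beta) A0_a mulmxBl -!mulmxA Bmat_mul_ones.
rewrite -raddfD mul_scalar_mx -scalemxAl -mulmxA mulmx_sc sc_betav_ones sum_beta.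
by rewrite scale1r scalerDl addrK.
Qed.

Lemma Amat_const_inv_betav alpha beta phi (a ph : R) :
  a != 0 -> (forall i, alpha i = a) -> (forall i, phi i = ph) -> \sum_i beta i = 1 ->
  Amat alpha beta phi \in unitmx ->
  invmx (Amat alpha beta phi) *m betav beta = a^-1 *: onesv R n.
Proof.
move=> a_neq0 alpha_a phi_ph sum_beta A_unit.
rewrite -[betav beta](scalerK a_neq0) -(Amat_const_mul_ones alpha_a phi_ph sum_beta).
by rewrite scalemxAr mulKmx.
Qed.

End MimickingMatrix.

Lemma omega_starE (R : realFieldType) (k n : nat) (Sigma : 'M[R]_k) (mu : 'cV[R]_k)
    (alpha beta phi : 'I_n -> R) :
  \sum_i beta i = 1 ->
  omega_star Sigma mu alpha beta phi =
  gmv Sigma + sc ((betav beta)^T *m invmx (sympart (Amat alpha beta phi)) *m betav beta)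
                *: (Qmat Sigma *m mu).
Proof.
move=> sum_beta; rewrite /omega_star /Wstar mulmxDl -!mulmxA !mulmx_sc mulmxA.
by rewrite sc_ones_betav sum_beta scale1r scalemxAr.
Qed.

Theorem corollary1 (R : realFieldType) (k n : nat)
  (mu : 'cV[R]_k) (Sigma : 'M[R]_k) (alpha beta phi : 'I_n -> R) :
  (2 <= k)%N -> Sigma^T = Sigma -> posdef Sigma ->
  (2 <= n)%N ->
  (forall i, 0 < alpha i) -> (forall i, 0 < beta i) -> \sum_i beta i = 1 ->
  (forall i, 0 < phi i) ->
  [/\
   (* (a) *)
   (injective alpha -> (forall i, beta i = (n%:R)^-1) ->
      Amat alpha beta phi = ((n%:R) ^+ 2)^-1 *: Atilde alpha phi /\
      omega_star Sigma mu alpha beta phi =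
        gmv Sigma + sc ((onesv R n)^T *m invmx (sympart (Atilde alpha phi)) *m onesv R n)
                      *: (Qmat Sigma *m mu)),
   (* (b) *)
   (injective alpha -> forall ph : R, 0 < ph -> (forall i, phi i = ph) ->
      [/\ Amat alpha beta phi
            = (A0mat alpha + ph%:M) *m Bmat beta - ph *: (betav beta *m (betav beta)^T),
          (Amat alpha beta phi)^T = Amat alpha beta phi,
          posdef (Amat alpha beta phi) &
          omega_star Sigma mu alpha beta phi =
            gmv Sigma + sc ((betav beta)^T *m invmx (Amat alpha beta phi) *m betav beta)
                          *: (Qmat Sigma *m mu)]) &
   (* (c) *)
   (forall a ph : R, (forall i, alpha i = a) -> (forall i, phi i = ph) ->
      omega_star Sigma mu alpha beta phi = omega_f Sigma mu alpha beta /\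
      omega_star Sigma mu alpha beta phi = gmv Sigma + a^-1 *: (Qmat Sigma *m mu))].
Proof.
move=> _ _ _ n_ge2 alpha_gt0 beta_gt0 sum_beta phi_gt0.
have n_gt0 : (0 < n)%N by apply: leq_trans n_ge2.
have A_pd := posdef_Amat alpha_gt0 beta_gt0 phi_gt0.
have Asym_unit := posdef_unitmx (posdef_sympart A_pd).
split.
- move=> _ beta_uniform; have N_neq0 : (n%:R : R) != 0 by rewrite pnatr_eq0 -lt0n.
  have A_Atilde := Amat_uniform_beta alpha phi n_gt0 beta_uniform.
  split => //; rewrite omega_starE // A_Atilde sympartZ invmxZ; last first.
    by rewrite -sympartZ -A_Atilde.
  rewrite betav_uniform // sc_quadZ -scalemxAr -scalemxAl scZ mulrA.
  by congr (_ + _ *: _); field.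
- move=> _ ph _ phi_ph; have A_sym := Amat_const_phi_sym alpha phi_ph sum_beta.
  split => //; first exact: Amat_const_phi.
  by rewrite omega_starE // sympart_id.
- move=> a ph alpha_a phi_ph; have A_sym := Amat_const_phi_sym alpha phi_ph sum_beta.
  have a_neq0 : a != 0 by rewrite gt_eqF // -(alpha_a (Ordinal n_gt0)).
  have A_unit : Amat alpha beta phi \in unitmx by rewrite -(sympart_id A_sym).
  have omega_alpha :
      omega_star Sigma mu alpha beta phi = gmv Sigma + a^-1 *: (Qmat Sigma *m mu).
    rewrite omega_starE // sympart_id // -mulmxA.
    rewrite (Amat_const_inv_betav a_neq0 alpha_a phi_ph sum_beta A_unit).
    by rewrite -scalemxAr scZ sc_betav_ones sum_beta mulr1.
  split => //; rewrite omega_alpha /omega_f /alpha_f /A0mat (diag_mx_row_const alpha_a).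
  by rewrite invmx_scalar mul_mx_scalar -scalemxAl scZ sc_ones_betav sum_beta mulr1 invrK.
Qed.
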